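(* Let $d\ge1$, $0<s_0<s_1$, $0<\alpha_0<\alpha_1$, $W=[s_0,s_1]\times[\alpha_0,\alpha_1]$, and $g\in L^2_0(\mathbb{T}^d;\mathbb{C})$ with Fourier coefficients $\hat g_k$. For $k\in\mathbb{Z}^d\setminus\{0\}$ let $E_k(s,\alpha)=\frac{\alpha}{\alpha+|k|^{2s}}$ and, for the partial derivatives of $\mathcal{S}(s,\alpha)=(E_k(s,\alpha)\hat g_k)_{k}$, let $\partial^i_\alpha\mathcal{S}(s,\alpha)=(\partial_\alpha^iE_k(s,\alpha)\hat g_k)_{k\neq0}$, $\partial_s^i\mathcal{S}(s,\alpha)=(\partial_s^iE_k(s,\alpha)\hat g_k)_{k\ne0}$, $\partial_{s,\alpha}\mathcal{S}(s,\alpha)=(\partial_s\partial_\alpha E_k(s,\alpha)\hat g_k)_{k\ne0}$. Then there are constants $M_{\alpha_1,i}>0$ ($i=1,2,3$) and $M_{\alpha_1}>0$ depending only on $\alpha_1$ (and $i$) such that for every $\varepsilon>0$, $i\in\{1,2,3\}$ and $(s,\alpha)\in W$: $$\|\partial^i_\alpha\mathcal{S}(s,\alpha)\|_{\ell^2}\le\sum_{k\ne0}\frac{i!}{|k|^{2si}}|\hat g_k|,\qquad \|\partial^i_s\mathcal{S}(s,\alpha)\|_{\ell^2}\le\sum_{k\ne0}\frac{M_{\alpha_1,i}}{\varepsilon^i|k|^{2s-i\varepsilon}}|\hat g_k|,$$ $$\|\partial_{s,\alpha}\mathcal{S}(s,\alpha)\|_{\ell^2}\le\sum_{k\ne0}\frac{M_{\alpha_1}}{\varepsilon|k|^{2s-\varepsilon}}|\hat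 g_k|.$$
   Context: $\mathbb{T}^d=\mathbb{R}^d/(2\pi\mathbb{Z})^d$; $L^2_0$ denotes zero-mean square-integrable functions; $\hat g_k=\int_{\mathbb{T}^d}g(x)e^{-ik\cdot x}dx$. *)

From HB Require Import structures.
From mathcomp Require Import all_boot all_order all_algebra.
From mathcomp Require Import all_classical all_reals all_analysis.
From mathcomp.real_closed Require Import complex.
Set Implicit Arguments. Unset Strict Implicit. Unset Printing Implicit Defensive.
Import Order.TTheory GRing.Theory Num.Theory.
Local Open Scope classical_set_scope.
Local Open Scope ring_scope.

Definition knorm (R : realType) (d : nat) (k : 'rV[int]_d) : R :=
  Num.sqrt (\sum_(j < d) ((k ord0 j)%:~R : R) ^+ 2).

Definition Ek (R : realType) (d : nat) (k : 'rV[int]_d) (s a : R) : R :=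
  a / (a + powR (knorm R k) (2 * s)).

Definition nonzero_pts (d : nat) : set 'rV[int]_d := [set k | k != 0].

Definition l2norm (R : realType) (d : nat) (x : 'rV[int]_d -> R[i]) : \bar R :=
  let S := (\esum_(k in @nonzero_pts d) ((Normc.normc (x k)) ^+ 2)%:E)%E in
  if S is r%:E then (Num.sqrt r)%:E else +oo%E.

(* g in L^2_0(T^d; C) represented by its Fourier coefficients ghat *)
Definition fourier_L2_0 (R : realType) (d : nat) (ghat : 'rV[int]_d -> R[i]) : Prop :=
  ghat 0 = 0 /\
  (\esum_(k in @nonzero_pts d) ((Normc.normc (ghat k)) ^+ 2)%:E < +oo)%E.

Definition dalpha_Ek (R : realType) (d : nat) (i : nat) (k : 'rV[int]_d) (s a : R) : R :=
  derive1n i (fun a' => @Ek R d k s a') a.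
Definition ds_Ek (R : realType) (d : nat) (i : nat) (k : 'rV[int]_d) (s a : R) : R :=
  derive1n i (fun s' => @Ek R d k s' a) s.
Definition dsalpha_Ek (R : realType) (d : nat) (k : 'rV[int]_d) (s a : R) : R :=
  derive1 (fun s' => derive1 (fun a' => @Ek R d k s' a') a) s.

From HB Require Import structures.
From mathcomp Require Import all_boot all_order all_algebra.
From mathcomp Require Import all_classical all_reals all_analysis.
From mathcomp.real_closed Require Import complex.
From mathcomp Require Import ring lra.
Import Order.TTheory GRing.Theory Num.Theory.
Import numFieldNormedType.Exports.
Local Open Scope classical_set_scope.
Local Open Scope ring_scope.

(* With c = |k|^(2s), the i-th alpha-derivative of alpha / (alpha + c) is
   (-1)^(i-1) i! c / (alpha + c)^(i+1), of modulus at most i! / c^i.  For the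
   s-derivatives write v = |k|^(2s) and b = 2 ln |k|, so that dv/ds = b v: for
   i <= 3 the i-th derivative is -alpha b^i v P_i(v) / (alpha + v)^(i+1) with
   an explicit polynomial P_i of degree i - 1, hence O(alpha b^i / v), and the
   logarithms are absorbed by (eps ln |k|)^i <= |k|^(i eps).  The l^2 norm of
   each family is finally bounded by its l^1 norm. *)

Lemma sum_sqr_le_sqr_sum {R : numDomainType} {T : Type} (s : seq T) (f : T -> R) :
  (forall i, 0 <= f i) ->
  \sum_(i <- s) f i ^+ 2 <= (\sum_(i <- s) f i) ^+ 2.
Proof.
move=> f0; elim: s => [|a s IH]; first by rewrite !big_nil expr0n.
rewrite !big_cons sqrrD -addrA lerD2l; apply: (le_trans IH).
by rewrite lerDr mulrn_wge0 // mulr_ge0 // sumr_ge0.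
Qed.

Section FilterDerivatives.
Variable R : realType.

Lemma derive1n_eq_of_is_derive (F : nat -> R -> R) (P : set R) (N : nat) :
  open P -> (forall n x, (n < N)%N -> P x -> is_derive x 1 (F n) (F n.+1 x)) ->
  forall n x, (n <= N)%N -> P x -> derive1n n (F 0%N) x = F n x.
Proof.
move=> oP dF; elim=> [//|n IH] x lt_nN Px.
rewrite derive1nS derive1E.
have -> : 'D_1 (derive1n n (F 0%N)) x = 'D_1 (F n) x.
  apply: near_eq_derive; have : \forall y \near x, P y by exact: open_nbhs_nbhs.
  by apply: filterS => y Py; apply: IH => //; exact: ltnW.
by have [_ ->] := dF n x lt_nN Px.
Qed.

Lemma is_derive_div_shifted_pow (C c x : R) (m : nat) : x + c != 0 ->
  is_derive x 1 (fun y => C / (y + c) ^+ m) (- (C * m%:R) / (x + c) ^+ m.+1).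
Proof.
move=> xc0.
have dpow : is_derive x 1 (fun y => (y + c) ^+ m) (m%:R * (x + c) ^+ m.-1).
  have := is_deriveX m (is_deriveD (is_derive_id x (1 : R)) (is_derive_cst c x 1)).
  by rewrite addr0 /GRing.scale /= mulr1 -exprfctE.
apply: is_derive_eq (is_deriveZ C
  (@is_deriveV R (fun y => (y + c) ^+ m) x _ 1 (expf_neq0 m xc0) dpow)) _.
rewrite /GRing.scale /=.
case: m {dpow} => [|m]; first by rewrite !mul0r !mulr0 oppr0 mul0r.
by rewrite /= !exprS; field; rewrite xc0 expf_neq0.
Qed.

Lemma is_derive_partial_fractions (phi : R -> R) (c0 c1 c2 c3 a v d : R) :
  0 < a -> 0 < v ->
  (forall y, 0 < y ->
     c0 + c1 / (y + a) + c2 / (y + a) ^+ 2 + c3 / (y + a) ^+ 3 = phi y) ->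
  - (c1 / (v + a) ^+ 2 + 2 * c2 / (v + a) ^+ 3 + 3 * c3 / (v + a) ^+ 4) = d ->
  is_derive v 1 phi d.
Proof.
move=> a0 v0 phiE <-.
have va0 : v + a != 0 by rewrite gt_eqF // addr_gt0.
have v_near_pos : \forall y \near v, 0 < y.
  by apply: open_nbhs_nbhs; split => //; exact: open_gt.
apply: is_derive_eq (near_eq_is_derive (filterS phiE v_near_pos)
  (is_deriveD (is_deriveD (is_deriveD (is_derive_cst c0 v 1)
    (is_derive_div_shifted_pow c1 a v 1 va0)) (is_derive_div_shifted_pow c2 a v 2 va0))
    (is_derive_div_shifted_pow c3 a v 3 va0))) _.
by rewrite add0r; ring.
Qed.

Lemma is_derive_powR_exponent (K r s : R) : 0 < K ->
  is_derive s 1 (fun t => K `^ (r * t)) (r * ln K * K `^ (r * s)).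
Proof.
move=> K0.
have -> : (fun t => K `^ (r * t)) = expR \o (fun t => r * ln K * t).
  by apply/funext => t; rewrite /powR gt_eqF //= mulrAC.
have dlin : is_derive s 1 (fun t => r * ln K * t) (r * ln K).
  apply: is_derive_eq (is_deriveZ (r * ln K) (is_derive_id s (1 : R))) _.
  by rewrite /GRing.scale /= mulr1.
apply: is_derive_eq (is_derive1_comp (is_derive_expR _) dlin) _.
by rewrite /powR gt_eqF //= [LHS]mulrC [r * s * _]mulrAC.
Qed.

Definition frac_derivn (c : R) (n : nat) : R -> R :=
  if n is m.+1 then fun a => (-1) ^+ m * m.+1`!%:R * c / (a + c) ^+ m.+2
  else fun a => a / (a + c).

Lemma is_derive_frac_derivn (c a : R) (n : nat) : 0 < c -> 0 < a ->
  is_derive a 1 (frac_derivn c n) (frac_derivn c n.+1 a).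
Proof.
move=> c0 a0; have ac0 : a + c != 0 by rewrite gt_eqF // addr_gt0.
case: n => [|m].
  apply: (is_derive_partial_fractions _ 1 (- c) 0 0 _ _ _ c0 a0) => [y y0|].
    have yc0 : y + c != 0 by rewrite gt_eqF // addr_gt0.
    by rewrite /=; field.
  by rewrite /= expr0 mul1r factS fact0 muln1; field.
apply: is_derive_eq
  (is_derive_div_shifted_pow ((-1) ^+ m * m.+1`!%:R * c) c a m.+2 ac0) _.
rewrite /= [in RHS]exprS [in RHS]factS natrM.
by field; rewrite expf_neq0.
Qed.

Lemma derive1n_frac (c a : R) (n : nat) : 0 < c -> 0 < a ->
  derive1n n (fun a' => a' / (a' + c)) a = frac_derivn c n a.
Proof.
move=> c0 a0.
apply: (derive1n_eq_of_is_derive (frac_derivn c) _ n (@open_gt _ 0)) => //.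
by move=> m x _ x0; exact: is_derive_frac_derivn.
Qed.

Lemma frac_derivn_bound (c a : R) (n : nat) : 0 < c -> 0 < a -> (0 < n)%N ->
  `|frac_derivn c n a| <= n`!%:R / c ^+ n.
Proof.
move=> c0 a0; case: n => [//|m] _.
have ac0 : 0 < a + c by rewrite addr_gt0.
have -> : `|frac_derivn c m.+1 a| = m.+1`!%:R * (c / (a + c) ^+ m.+2).
  rewrite /frac_derivn -!mulrA normrM normrX normrN1 expr1n mul1r ger0_norm //.
  by rewrite mulr_ge0 // divr_ge0 ?exprn_ge0 ?ltW.
rewrite ler_wpM2l //; apply: (@le_trans _ _ (c / c ^+ m.+2)).
  apply: ler_wpM2l; first exact: ltW.
  rewrite lef_pV2 ?posrE ?exprn_gt0 //.
  by rewrite lerXn2r ?nnegrE //; lra.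
by rewrite exprS invfM mulrA mulfV ?gt_eqF // mul1r.
Qed.

Lemma derive1_frac (c a : R) : 0 < c -> 0 < a ->
  derive1 (fun a' => a' / (a' + c)) a = c / (a + c) ^+ 2.
Proof.
move=> c0 a0; have := derive1n_frac c a 1 c0 a0.
by rewrite /frac_derivn expr0 mul1r factS fact0 muln1 mul1r.
Qed.

Definition ds_poly (a : R) (n : nat) (v : R) : R :=
  match n with
  | 2 => a - v
  | 3 => a ^+ 2 - 4 * a * v + v ^+ 2
  | _ => 1
  end.

(* [ds_frac a b n v] is the n-th s-derivative of a / (a + |k|^(2s)), written
   in terms of v = |k|^(2s) and b = 2 ln |k|. *)
Definition ds_frac (a b : R) (n : nat) (v : R) : R :=
  if n is 0 then a / (a + v)
  else - (a * b ^+ n) * (v * ds_poly a n v / (a + v) ^+ n.+1).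

Lemma ds_fracS (a b v : R) (n : nat) : 0 < a -> 0 < v -> (n < 3)%N ->
  exists2 d, is_derive v 1 (ds_frac a b n) d & ds_frac a b n.+1 v = d * (b * v).
Proof.
move=> a0 v0; have av0 : a + v != 0 by rewrite gt_eqF // addr_gt0.
have va0 : v + a != 0 by rewrite addrC.
have pos_ne0 y : 0 < y -> y + a != 0 by move=> y0; rewrite gt_eqF // addr_gt0.
case: n => [|[|[|//]]] _.
- exists (- a / (a + v) ^+ 2); last by rewrite /=; field.
  apply: (is_derive_partial_fractions _ 0 a 0 0 _ _ _ a0 v0) => [y /pos_ne0 ya0|].
    by rewrite /= [a + y]addrC; field.
  by rewrite [a + v]addrC; field.
- exists (- (a * b) * (a - v) / (a + v) ^+ 3); last by rewrite /=; field.
  apply: (is_derive_partial_fractions _ 0 (- (a * b)) (a * b * a) 0 _ _ _ a0 v0)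
    => [y /pos_ne0 ya0|].
    by rewrite /= [a + y]addrC; field.
  by rewrite [a + v]addrC; field.
- exists (- (a * b ^+ 2) * (a ^+ 2 - 4 * a * v + v ^+ 2) / (a + v) ^+ 4).
    2: by rewrite /=; field.
  apply: (is_derive_partial_fractions _ 0 (a * b ^+ 2) (- 3 * a * a * b ^+ 2)
    (2 * a * a * a * b ^+ 2) _ _ _ a0 v0) => [y /pos_ne0 ya0|].
    by rewrite /= [a + y]addrC; field.
  by rewrite [a + v]addrC; field.
Qed.

Lemma is_derive_comp_powR (phi : R -> R) (K s d : R) : 0 < K ->
  is_derive (K `^ (2 * s)) 1 phi d ->
  is_derive s 1 (fun t => phi (K `^ (2 * t))) (d * (2 * ln K * K `^ (2 * s))).
Proof.
move=> K0 dphi.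
exact: (@is_derive1_comp _ phi (fun t => K `^ (2 * t)) s _ _ dphi
  (is_derive_powR_exponent K 2 s K0)).
Qed.

Lemma derive1n_ds_frac (a K s : R) (n : nat) : 0 < a -> 0 < K -> (n <= 3)%N ->
  derive1n n (fun t => a / (a + K `^ (2 * t))) s =
  ds_frac a (2 * ln K) n (K `^ (2 * s)).
Proof.
move=> a0 K0 n3.
apply: (derive1n_eq_of_is_derive
  (fun m t => ds_frac a (2 * ln K) m (K `^ (2 * t))) _ 3 openT) => //.
move=> m t m3 _.
have [d dD ->] := ds_fracS a (2 * ln K) _ m a0 (powR_gt0 (2 * t) K0) m3.
exact: is_derive_comp_powR.
Qed.

Lemma ds_poly_bound (a v : R) (n : nat) : 0 < a -> 0 < v -> (1 <= n <= 3)%N ->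
  v ^+ 2 * `|ds_poly a n v| <= 2 * (a + v) ^+ n.+1.
Proof.
move=> a0 v0 /andP[n1 n3].
have vav : v ^+ 2 <= (a + v) ^+ 2 by rewrite lerXn2r ?nnegrE; lra.
suff hP : `|ds_poly a n v| <= 2 * (a + v) ^+ n.-1.
  apply: le_trans (ler_pM (sqr_ge0 _) (normr_ge0 _) vav hP) _.
  by rewrite mulrCA -exprD add2n prednK.
case: n n1 n3 {vav} => [|[|[|[|//]]]] // _ _; rewrite /ds_poly.
- by rewrite normr1 expr0 mulr1; lra.
- by rewrite expr1 ler_norml; apply/andP; split; lra.
- by rewrite ler_norml; apply/andP; split; nra.
Qed.

Lemma ds_poly_frac_bound (a v : R) (n : nat) : 0 < a -> 0 < v -> (1 <= n <= 3)%N ->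
  `|v * ds_poly a n v / (a + v) ^+ n.+1| <= 2 / v.
Proof.
move=> a0 v0 n13; have avn : 0 < (a + v) ^+ n.+1 by rewrite exprn_gt0 // addr_gt0.
rewrite normrM normfV normrM (gtr0_norm v0) (gtr0_norm avn).
rewrite ler_pdivrMr // [2 / v * _]mulrAC ler_pdivlMr // mulrAC -expr2.
exact: ds_poly_bound.
Qed.

Lemma ds_frac_bound (a b v : R) (n : nat) :
  0 < a -> 0 < v -> 0 <= b -> (1 <= n <= 3)%N ->
  `|ds_frac a b n v| <= 2 * a * b ^+ n / v.
Proof.
move=> a0 v0 b0 n13; case: n n13 => [//|n] n13.
have -> : 2 * a * b ^+ n.+1 / v = a * b ^+ n.+1 * (2 / v) by rewrite mulrCA !mulrA.
rewrite /ds_frac normrM normrN normrM (gtr0_norm a0) normrX (ger0_norm b0).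
by rewrite ler_wpM2l ?mulr_ge0 ?exprn_ge0 ?ds_poly_frac_bound // ltW.
Qed.

Lemma dsalpha_frac (a K s : R) : 0 < a -> 0 < K ->
  derive1 (fun s' => derive1 (fun a' => a' / (a' + K `^ (2 * s'))) a) s =
  2 * ln K * (K `^ (2 * s) * ds_poly a 2 (K `^ (2 * s)) / (a + K `^ (2 * s)) ^+ 3).
Proof.
move=> a0 K0; set v := K `^ (2 * s); have v0 : 0 < v by exact: powR_gt0.
have -> : (fun s' => derive1 (fun a' => a' / (a' + K `^ (2 * s'))) a) =
    (fun s' => (fun w => w / (a + w) ^+ 2) (K `^ (2 * s'))).
  by apply/funext => s'; rewrite derive1_frac ?powR_gt0.
have dphi : is_derive v 1 (fun w => w / (a + w) ^+ 2) ((a - v) / (a + v) ^+ 3).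
  have va0 : v + a != 0 by rewrite gt_eqF // addr_gt0.
  apply: (is_derive_partial_fractions _ 0 1 (- a) 0 _ _ _ a0 v0) => [y y0|].
    have ya0 : y + a != 0 by rewrite gt_eqF // addr_gt0.
    by rewrite [a + y]addrC; field.
  by rewrite [a + v]addrC; field.
rewrite derive1E; have [_ ->] := is_derive_comp_powR _ _ _ _ K0 dphi.
by rewrite /ds_poly -/v; ring.
Qed.

Lemma ln_pow_div_powR_le (K s eps : R) (n : nat) : 1 <= K -> 0 < eps ->
  ln K ^+ n / K `^ s <= (eps ^+ n * K `^ (s - n%:R * eps))^-1.
Proof.
move=> K1 e0; have K0 : 0 < K by lra.
have lnK0 : 0 <= ln K by exact: ln_ge0.
rewrite /powR gt_eqF // mulrBl expRB -mulrA expRM_natl.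
have eps_ln : (eps * ln K) ^+ n <= expR (eps * ln K) ^+ n.
  rewrite lerXn2r ?nnegrE ?expR_ge0 ?(mulr_ge0 (ltW e0) lnK0) //.
  by have := expR_ge1Dx (eps * ln K); lra.
rewrite invfM invf_div mulrA ler_wpM2r ?invr_ge0 ?expR_ge0 //.
by rewrite ler_pdivlMl ?exprn_gt0 // -exprMn.
Qed.

Lemma esum_sqr_le (T : choiceType) (D : set T) (f : T -> R) (r : R) :
  (forall k, 0 <= f k) -> \esum_(k in D) (f k)%:E = r%:E ->
  (\esum_(k in D) (f k ^+ 2)%:E <= (r ^+ 2)%:E)%E.
Proof.
move=> f0 Dr; apply: ge_ereal_sup => _ [X [finX XD] <-].
have sumX : \sum_(k \in X) f k <= r.
  by rewrite -lee_fin -Dr -fsumEFin //; apply: esum_ge; exists X.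
rewrite fsumEFin // lee_fin fsbig_finite //=; rewrite fsbig_finite // in sumX.
apply: le_trans (sum_sqr_le_sqr_sum _ _ f0) _.
have sum0 : 0 <= \sum_(k <- finmap.enum_fset (fset_set X)) f k by exact: sumr_ge0.
by rewrite lerXn2r ?nnegrE // (le_trans sum0).
Qed.

Lemma normc_ge0 (z : R[i]) : 0 <= Normc.normc z.
Proof. by case: z => a b; rewrite /= sqrtr_ge0. Qed.

Lemma normc_scale_real (r : R) (z : R[i]) :
  Normc.normc (r%:C%C * z) = `|r| * Normc.normc z.
Proof. by rewrite Normc.normcM /= expr0n /= addr0 sqrtr_sqr. Qed.

Lemma l2norm_le_l1norm (d : nat) (x : 'rV[int]_d -> R[i]) :
  (l2norm x <= \esum_(k in @nonzero_pts d) (Normc.normc (x k))%:E)%E.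
Proof.
have l1_ge0 : (0 <= \esum_(k in @nonzero_pts d) (Normc.normc (x k))%:E)%E.
  by apply: esum_ge0 => k _; rewrite lee_fin normc_ge0.
have l2sq_ge0 : (0 <= \esum_(k in @nonzero_pts d) (Normc.normc (x k) ^+ 2)%:E)%E.
  by apply: esum_ge0 => k _; rewrite lee_fin sqr_ge0.
move: l1_ge0; case l1E : (esum _ _) => [r| |] // r0; last by rewrite leey.
have := esum_sqr_le _ _ _ _ (fun k => normc_ge0 (x k)) l1E.
rewrite /l2norm; move: l2sq_ge0; case: (esum _ _) => [s| |] //.
rewrite !lee_fin => s0 sr; rewrite lee_fin in r0.
by rewrite -(ger0_norm r0) -sqrtr_sqr ler_sqrt // sqr_ge0.
Qed.

Lemma knorm_ge1 (d : nat) (k : 'rV[int]_d) : k != 0 -> 1 <= knorm R k.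
Proof.
move=> k0; have [j kj0] : exists j, k ord0 j != 0.
  apply/existsP; apply: contraNT k0 => /existsPn kj0.
  by apply/eqP/rowP => j; rewrite mxE; exact/eqP/negPn/kj0.
have kj1 : 1 <= ((k ord0 j)%:~R : R) ^+ 2 by rewrite sqr_intr_ge1 ?intr_int ?intr_eq0.
have sum1 : 1 <= \sum_(i < d) ((k ord0 i)%:~R : R) ^+ 2.
  by rewrite (bigD1 j) //= (le_trans kj1) // lerDl sumr_ge0 // => i _; exact: sqr_ge0.
by rewrite /knorm -[leLHS]sqrtr1 ler_sqrt // (le_trans ler01).
Qed.

Lemma l2norm_multiplier_le (d : nat) (c y : 'rV[int]_d -> R) (g : 'rV[int]_d -> R[i]) :
  (forall k, k != 0 -> `|c k| <= y k) ->
  (l2norm (fun k => ((c k)%:C%C * g k)%R)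
    <= \esum_(k in @nonzero_pts d) (y k * Normc.normc (g k))%:E)%E.
Proof.
move=> cy; apply: le_trans (l2norm_le_l1norm _ _) (le_esum _) => k k0.
by rewrite lee_fin normc_scale_real ler_wpM2r ?normc_ge0 ?cy.
Qed.

Lemma dalpha_Ek_bound (d i : nat) (k : 'rV[int]_d) (s a : R) :
  k != 0 -> 0 < a -> (0 < i)%N ->
  `|dalpha_Ek i k s a| <= i`!%:R / knorm R k `^ (2 * s * i%:R).
Proof.
move=> k0 a0 i0; have K0 : 0 < knorm R k := lt_le_trans ltr01 (knorm_ge1 _ _ k0).
rewrite /dalpha_Ek /Ek derive1n_frac ?powR_gt0 //.
rewrite (powRrM (knorm R k) (2 * s) i%:R) (powR_mulrn _ (powR_ge0 _ _)).
by apply: frac_derivn_bound => //; exact: powR_gt0.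
Qed.

Lemma ds_Ek_bound (d i : nat) (k : 'rV[int]_d) (s a alpha1 eps : R) :
  k != 0 -> 0 < a -> a <= alpha1 -> 0 < eps -> (1 <= i <= 3)%N ->
  `|ds_Ek i k s a| <=
  2 * alpha1 * 2 ^+ i / (eps ^+ i * knorm R k `^ (2 * s - i%:R * eps)).
Proof.
move=> k0 a0 a_le e0 /[dup] i13 /andP[_ i3].
have K1 := knorm_ge1 _ _ k0; have K0 : 0 < knorm R k by lra.
have lnK0 : 0 <= 2 * ln (knorm R k) by rewrite mulr_ge0 ?ln_ge0.
rewrite /ds_Ek /Ek derive1n_ds_frac //.
apply: le_trans (ds_frac_bound _ _ _ _ a0 (powR_gt0 _ K0) lnK0 i13) _.
rewrite exprMn !mulrA -(mulrA _ (ln _ ^+ i)).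
apply: ler_pM; rewrite ?mulr_ge0 ?exprn_ge0 ?ln_ge0 ?invr_ge0 ?powR_ge0 //; first lra.
  by rewrite ler_wpM2r ?exprn_ge0 // ler_wpM2l.
exact: ln_pow_div_powR_le _ _ _ _ K1 e0.
Qed.

Lemma dsalpha_Ek_bound (d : nat) (k : 'rV[int]_d) (s a eps : R) :
  k != 0 -> 0 < a -> 0 < eps ->
  `|dsalpha_Ek k s a| <= 4 / (eps * knorm R k `^ (2 * s - eps)).
Proof.
move=> k0 a0 e0; have K1 := knorm_ge1 _ _ k0; have K0 : 0 < knorm R k by lra.
have lnK0 : 0 <= ln (knorm R k) by exact: ln_ge0.
rewrite /dsalpha_Ek /Ek dsalpha_frac // normrM ger0_norm ?mulr_ge0 //.
apply: le_trans (ler_wpM2l (mulr_ge0 _ lnK0)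
  (ds_poly_frac_bound _ _ 2 a0 (powR_gt0 _ K0) _)) _ => //.
have := ln_pow_div_powR_le _ (2 * s) _ 1 K1 e0; rewrite !expr1 mul1r => ln_le.
have -> : 2 * ln (knorm R k) * (2 / knorm R k `^ (2 * s)) =
    4 * (ln (knorm R k) / knorm R k `^ (2 * s)) by ring.
by rewrite ler_wpM2l.
Qed.

End FilterDerivatives.

Theorem lemma3 (R : realType) (alpha1 : R) (halpha1 : 0 < alpha1) :
  exists (M : nat -> R) (M' : R),
    (forall i : nat, (1 <= i <= 3)%N -> 0 < M i) /\ 0 < M' /\
    forall (d : nat) (s0 s1 alpha0 : R) (ghat : 'rV[int]_d -> R[i]),
      (1 <= d)%N -> 0 < s0 -> s0 < s1 -> 0 < alpha0 -> alpha0 < alpha1 ->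
      fourier_L2_0 ghat ->
      forall (eps : R) (i : nat) (s a : R),
        0 < eps -> (1 <= i <= 3)%N ->
        s0 <= s <= s1 -> alpha0 <= a <= alpha1 ->
        [/\ (l2norm (fun k => ((dalpha_Ek i k s a)%:C%C * ghat k)%R)
             <= \esum_(k in @nonzero_pts d)
                  ((i`!%:R / powR (knorm R k) (2 * s * i%:R)) * Normc.normc (ghat k))%:E)%E,
            (l2norm (fun k => ((ds_Ek i k s a)%:C%C * ghat k)%R)
             <= \esum_(k in @nonzero_pts d)
                  (M i / (eps ^+ i * powR (knorm R k) (2 * s - i%:R * eps))
                     * Normc.normc (ghat k))%:E)%E
          & (l2norm (fun k => ((dsalpha_Ek k s a)%:C%C * ghat k)%R)
             <= \esum_(k in @nonzero_pts d)
                  (M' / (eps * powR (knorm R k) (2 * s - eps)) * Normc.normc (ghat k))%:E)%E].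
Proof.
exists (fun i => 2 * alpha1 * 2 ^+ i), 4.
split; first by move=> i _; rewrite !mulr_gt0 ?exprn_gt0.
split => // d s0 s1 alpha0 ghat _ _ _ alpha00 _ _ eps i s a e0 i13 _ /andP[alpha0a a1].
have a0 : 0 < a by exact: lt_le_trans alpha00 alpha0a.
split; apply: l2norm_multiplier_le => k k0.
- by apply: dalpha_Ek_bound => //; case/andP: i13.
- exact: ds_Ek_bound.
- exact: dsalpha_Ek_bound.
Qed.
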